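(* Let $\gamma$ be an admissible path. Then for any $t$ and $s$ in the domain of $\gamma$ with $t<s<t+\pi$, we have $|\gamma(s)-\gamma(t)|\ge 2\sin\frac{s-t}{2}$.
   Context: An admissible path is a continuously differentiable planar curve $\gamma$ parameterized by arclength (so $\gamma'(t)$ is a unit tangent vector) such that for all $t<s<t+\pi$ in its domain, the angle $\alpha(s,t)$ between the directions $\gamma'(s)$ and $\gamma'(t)$ satisfies $\alpha(s,t)\le s-t$ (mean curvature bounded by 1). *)

From Stdlib Require Import Reals.
Open Scope R_scope.

Definition is_interval (I : R -> Prop) : Prop :=
  forall a b c, I a -> I c -> a <= b <= c -> I b.

Definition has_deriv_on (I : R -> Prop) (f f' : R -> R) : Prop :=
  forall t, I t -> forall eps, 0 < eps -> exists delta, 0 < delta /\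
    forall u, I u -> u <> t -> Rabs (u - t) < delta ->
      Rabs ((f u - f t) / (u - t) - f' t) < eps.

Definition continuous_on_I (I : R -> Prop) (g : R -> R) : Prop :=
  forall t, I t -> forall eps, 0 < eps -> exists delta, 0 < delta /\
    forall u, I u -> Rabs (u - t) < delta -> Rabs (g u - g t) < eps.

(** Angle between two vectors (a1,a2), (b1,b2) of the plane, for unit vectors:
    arccos of the dot product, in [0, PI]. *)
Definition angle (a1 a2 b1 b2 : R) : R := acos (a1 * b1 + a2 * b2).

Definition admissible (I : R -> Prop) (x y : R -> R) : Prop :=
  is_interval I /\
  exists x' y' : R -> R,
    has_deriv_on I x x' /\ has_deriv_on I y y' /\
    continuous_on_I I x' /\ continuous_on_I I y' /\
    (forall t, I t -> x' t ^ 2 + y' t ^ 2 = 1) /\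
    (forall t s, I t -> I s -> t < s < t + PI ->
       angle (x' s) (y' s) (x' t) (y' t) <= s - t).

(** Let [m] be the midpoint of [[t, s]] and [u = gamma'(m)].  For [tau] in
    [[t, s]] we have [|tau - m| <= (s - t)/2 < PI], so the angle bound gives
    [<u, gamma'(tau)> >= cos (tau - m)].  Hence [<u, gamma> - sin (. - m)] is
    nondecreasing on [[t, s]], i.e. [<u, gamma(s) - gamma(t)> >= 2 sin ((s - t)/2)],
    and the chord is at least as long as its projection on the unit vector [u]. *)
From Stdlib Require Import Reals.
Open Scope R_scope.
From Stdlib Require Import Lra Psatz Classical.

Lemma has_deriv_on_sub (I J : R -> Prop) f f' :
  (forall u, J u -> I u) -> has_deriv_on I f f' -> has_deriv_on J f f'.
Proof.
  intros HJI Hf t Jt eps Heps.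
  destruct (Hf t (HJI t Jt) eps Heps) as [d [Hd Hq]].
  exists d; split; [exact Hd|].
  intros u Ju; apply Hq, HJI, Ju.
Qed.

Lemma has_deriv_on_plus (I : R -> Prop) f f' g g' :
  has_deriv_on I f f' -> has_deriv_on I g g' ->
  has_deriv_on I (fun u => f u + g u) (fun u => f' u + g' u).
Proof.
  intros Hf Hg t It eps Heps.
  destruct (Hf t It (eps / 2) ltac:(lra)) as [df [Hdf Hqf]].
  destruct (Hg t It (eps / 2) ltac:(lra)) as [dg [Hdg Hqg]].
  exists (Rmin df dg); split; [now apply Rmin_glb_lt|].
  intros u Iu Hut Hud.
  specialize (Hqf u Iu Hut (Rlt_le_trans _ _ _ Hud (Rmin_l _ _))).
  specialize (Hqg u Iu Hut (Rlt_le_trans _ _ _ Hud (Rmin_r _ _))).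
  replace ((f u + g u - (f t + g t)) / (u - t) - (f' t + g' t))
    with (((f u - f t) / (u - t) - f' t) + ((g u - g t) / (u - t) - g' t))
    by (field; lra).
  eapply Rle_lt_trans; [apply Rabs_triang|lra].
Qed.

Lemma has_deriv_on_scal (I : R -> Prop) k f f' :
  has_deriv_on I f f' -> has_deriv_on I (fun u => k * f u) (fun u => k * f' u).
Proof.
  intros Hf t It eps Heps.
  assert (Hk := Rabs_pos k).
  destruct (Hf t It (eps / (Rabs k + 1))) as [d [Hd Hq]].
  { apply Rdiv_lt_0_compat; lra. }
  exists d; split; [exact Hd|].
  intros u Iu Hut Hud.
  specialize (Hq u Iu Hut Hud).
  replace ((k * f u - k * f t) / (u - t) - k * f' t)
    with (k * ((f u - f t) / (u - t) - f' t)) by (field; lra).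
  rewrite Rabs_mult.
  apply Rle_lt_trans with (Rabs k * (eps / (Rabs k + 1))).
  - apply Rmult_le_compat_l; lra.
  - apply Rmult_lt_reg_r with (Rabs k + 1); [lra|].
    field_simplify; lra.
Qed.

Lemma has_deriv_on_sin_shift (I : R -> Prop) m :
  has_deriv_on I (fun u => sin (u - m)) (fun u => cos (u - m)).
Proof.
  intros t _ eps Heps.
  destruct (derivable_pt_lim_sin (t - m) eps Heps) as [d Hq].
  exists d; split; [apply cond_pos|].
  intros u _ Hut Hud.
  specialize (Hq (u - t) ltac:(lra) Hud).
  now replace (t - m + (u - t)) with (u - m) in Hq by ring.
Qed.

Section Nondecreasing.

Variables (F F' : R -> R) (a b : R).
Hypothesis HF : has_deriv_on (fun u => a <= u <= b) F F'.
Hypothesis HF'_ge0 : forall u, a <= u <= b -> 0 <= F' u.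

Section SlopeBound.

Variable e : R.
Hypothesis He : 0 < e.

Let above_line c := a <= c <= b /\ F a - e * (c - a) <= F c.

Lemma above_line_local c : a <= c <= b -> exists d, 0 < d /\
  forall u, a <= u <= b -> Rabs (u - c) < d ->
    (u <= c -> above_line u -> above_line c) /\
    (c <= u -> above_line c -> above_line u).
Proof.
  intros Hc.
  destruct (HF c Hc e He) as [d [Hd Hq]].
  exists d; split; [exact Hd|].
  intros u Hu Hud.
  destruct (Req_dec u c) as [->|Huc]; [tauto|].
  specialize (Hq u Hu Huc Hud); specialize (HF'_ge0 c Hc).
  apply Rabs_def2 in Hq.
  set (q := (F u - F c) / (u - c)) in Hq.
  assert (Hqe : - e < q) by lra.
  assert (Hdiff : F u - F c = q * (u - c)) by (unfold q; field; lra).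
  unfold above_line; split; intros Hle [_ Hline].
  - split; [exact Hc|nra].
  - split; [exact Hu|nra].
Qed.

Lemma above_line_right_end : a <= b -> F a - e * (b - a) <= F b.
Proof.
  intros Hab.
  assert (Ea : above_line a) by (split; lra).
  destruct (completeness above_line) as [m [Hub Hlub]].
  { exists b; intros c [Hc _]; lra. }
  { exists a; exact Ea. }
  assert (Ham : a <= m) by (apply Hub, Ea).
  assert (Hmb : m <= b) by (apply Hlub; intros c [Hc _]; lra).
  destruct (above_line_local m (conj Ham Hmb)) as [d [Hd Hloc]].
  assert (Em : above_line m).
  { assert (Hnear : exists u, above_line u /\ m - d < u).
    { apply NNPP; intros Hno.
      enough (m <= m - d) by lra.
      apply Hlub; intros c Ec; apply Rnot_lt_le; intros Hc; apply Hno; eauto. }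
    destruct Hnear as [u [Eu Hu]].
    assert (Hum : u <= m) by (apply Hub, Eu).
    assert (Hu' := proj1 Eu).
    apply (Hloc u Hu' ltac:(rewrite Rabs_left1 by lra; lra)); auto. }
  destruct (Rlt_or_le m b) as [Hlt|Hge].
  - set (u := m + Rmin d (b - m) / 2).
    assert (Hmin := Rmin_glb_lt d (b - m) 0 Hd ltac:(lra)).
    assert (Hmin_d := Rmin_l d (b - m)); assert (Hmin_b := Rmin_r d (b - m)).
    assert (Eu : above_line u).
    { apply (Hloc u ltac:(unfold u; lra)); [|unfold u; lra|exact Em].
      rewrite Rabs_right; unfold u; lra. }
    assert (u <= m) by (apply Hub, Eu).
    unfold u in *; lra.
  - replace b with m by lra; apply Em.
Qed.

End SlopeBound.

Lemma has_deriv_on_ge0_le : a <= b -> F a <= F b.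
Proof.
  intros Hab.
  destruct (Req_dec a b) as [<-|Hne]; [lra|].
  apply le_epsilon; intros eps Heps.
  assert (H := above_line_right_end (eps / (b - a))
                 ltac:(apply Rdiv_lt_0_compat; lra) Hab).
  replace (eps / (b - a) * (b - a)) with eps in H by (field; lra).
  lra.
Qed.

End Nondecreasing.

Lemma unit_dot_bounds a1 a2 b1 b2 : a1 ^ 2 + a2 ^ 2 = 1 -> b1 ^ 2 + b2 ^ 2 = 1 ->
  -1 <= a1 * b1 + a2 * b2 <= 1.
Proof.
  intros Ha Hb.
  assert (h1 := pow2_ge_0 (a1 + b1)); assert (h2 := pow2_ge_0 (a2 + b2)).
  assert (h3 := pow2_ge_0 (a1 - b1)); assert (h4 := pow2_ge_0 (a2 - b2)).
  split; nra.
Qed.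

Lemma cos_le_dot_of_angle_le a1 a2 b1 b2 th :
  a1 ^ 2 + a2 ^ 2 = 1 -> b1 ^ 2 + b2 ^ 2 = 1 ->
  angle a1 a2 b1 b2 <= th -> th <= PI -> cos th <= a1 * b1 + a2 * b2.
Proof.
  unfold angle; intros Ha Hb Hang Hth.
  assert (Hd := unit_dot_bounds a1 a2 b1 b2 Ha Hb).
  destruct (acos_bound (a1 * b1 + a2 * b2)).
  rewrite <- (cos_acos _ Hd).
  apply cos_decr_1; lra.
Qed.

Lemma dot_le_norm_of_unit u1 u2 v1 v2 : u1 ^ 2 + u2 ^ 2 = 1 ->
  u1 * v1 + u2 * v2 <= sqrt (v1 ^ 2 + v2 ^ 2).
Proof.
  intros Hu.
  set (p := u1 * v1 + u2 * v2).
  destruct (Rle_or_lt p 0) as [Hp|Hp].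
  - assert (0 <= sqrt (v1 ^ 2 + v2 ^ 2)) by apply sqrt_pos; lra.
  - rewrite <- (sqrt_pow2 p) by lra.
    apply sqrt_le_1_alt.
    assert (h := pow2_ge_0 (u1 * v2 - u2 * v1)).
    replace (v1 ^ 2 + v2 ^ 2) with ((u1 ^ 2 + u2 ^ 2) * (v1 ^ 2 + v2 ^ 2))
      by (rewrite Hu; ring).
    unfold p; nra.
Qed.

Section Chord.

Variables (I : R -> Prop) (x y x' y' : R -> R).
Hypothesis HI : is_interval I.
Hypothesis Hx : has_deriv_on I x x'.
Hypothesis Hy : has_deriv_on I y y'.
Hypothesis Hunit : forall t, I t -> x' t ^ 2 + y' t ^ 2 = 1.
Hypothesis Hangle : forall t s, I t -> I s -> t < s < t + PI ->
  angle (x' s) (y' s) (x' t) (y' t) <= s - t.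

Lemma cos_le_tangent_dot m tau : I m -> I tau -> Rabs (tau - m) < PI ->
  cos (tau - m) <= x' m * x' tau + y' m * y' tau.
Proof.
  intros Im Itau Hdist.
  assert (Hm := Hunit m Im); assert (Htau := Hunit tau Itau).
  destruct (Rtotal_order tau m) as [Hlt|[->|Hgt]].
  - rewrite Rabs_left in Hdist by lra.
    replace (tau - m) with (- (m - tau)) by ring; rewrite cos_neg.
    apply cos_le_dot_of_angle_le; try assumption; try lra.
    apply Hangle; auto; lra.
  - rewrite Rminus_diag, cos_0; nra.
  - rewrite Rabs_right in Hdist by lra.
    rewrite (Rplus_comm (x' m * _)), (Rmult_comm (x' m)), (Rmult_comm (y' m)),
      Rplus_comm.
    apply cos_le_dot_of_angle_le; try assumption; try lra.
    apply Hangle; auto; lra.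
Qed.

Lemma midpoint_tangent_chord t s : I t -> I s -> t < s < t + PI ->
  let m := (t + s) / 2 in
  2 * sin ((s - t) / 2) <= x' m * (x s - x t) + y' m * (y s - y t).
Proof.
  intros It Is Hts m.
  assert (Isub : forall u, t <= u <= s -> I u) by (intros u; apply HI; assumption).
  assert (Im : I m) by (apply Isub; unfold m; lra).
  set (F := fun u => x' m * x u + y' m * y u + -1 * sin (u - m)).
  assert (HF : has_deriv_on (fun u => t <= u <= s) F
    (fun u => x' m * x' u + y' m * y' u + -1 * cos (u - m))).
  { apply (has_deriv_on_sub I); [exact Isub|].
    repeat apply has_deriv_on_plus; apply has_deriv_on_scal;
      auto using has_deriv_on_sin_shift. }
  assert (Hmono : F t <= F s).
  { apply (has_deriv_on_ge0_le F _ t s HF); [|lra].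
    intros u Hu.
    assert (cos (u - m) <= x' m * x' u + y' m * y' u); [|lra].
    apply cos_le_tangent_dot; auto.
    apply Rabs_def1; unfold m; lra. }
  unfold F in Hmono.
  replace (s - m) with ((s - t) / 2) in Hmono by (unfold m; field).
  replace (t - m) with (- ((s - t) / 2)) in Hmono by (unfold m; field).
  rewrite sin_neg in Hmono.
  lra.
Qed.

End Chord.

Theorem lemma15 (I : R -> Prop) (x y : R -> R) :
  admissible I x y ->
  forall t s, I t -> I s -> t < s < t + PI ->
    2 * sin ((s - t) / 2) <= sqrt ((x s - x t) ^ 2 + (y s - y t) ^ 2).
Proof.
  intros [HI [x' [y' [Hx [Hy [_ [_ [Hunit Hangle]]]]]]]] t s It Is Hts.
  eapply Rle_trans.
  - exact (midpoint_tangent_chord I x y x' y' HI Hx Hy Hunit Hangle t s It Is Hts).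
  - apply dot_le_norm_of_unit, Hunit.
    apply (HI t _ s); auto; lra.
Qed.
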